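(* For a right $R$-module $M$, the following are equivalent: (1) $M$ is injective; (2) $M$ is pseudo principally $N$-injective for every right $R$-module $N$.
   Context: All rings are associative with identity and all modules are unitary right $R$-modules. A submodule $A$ of $N$ is $N$-cyclic if $A\cong N/L$ for some submodule $L$ of $N$ (equivalently, $A$ is the image of an endomorphism of $N$). $M$ is pseudo principally $N$-injective if for every $N$-cyclic submodule $A$ of $N$, every $R$-monomorphism $A\to M$ extends to an $R$-homomorphism $N\to M$. *)

From HB Require Import structures.
From mathcomp Require Import all_boot all_order all_algebra.
Set Implicit Arguments. Unset Strict Implicit. Unset Printing Implicit Defensive.
Import GRing.Theory.
Local Open Scope ring_scope.

(* Right R-modules are modelled as left modules over the converse ring R^c:
   for M : rmodType R, the scalar action  r *: m  (r : R^c) is  m * r. *)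
Notation rmodType R := (lmodType (R^c)%type).

Section Defs.
Variable R : pzRingType.

Definition is_submodule (N : rmodType R) (A : {pred N}) : Prop :=
  0 \in A /\ (forall (r : R^c) (u v : N), u \in A -> v \in A -> r *: u + v \in A).

(* A is N-cyclic: A is the image of an R-endomorphism of N
   (equivalently A is isomorphic to N/L for some submodule L of N). *)
Definition N_cyclic (N : rmodType R) (A : {pred N}) : Prop :=
  exists g : {linear N -> N}, forall x : N, x \in A <-> exists y : N, x = g y.

Definition hom_on (N M : rmodType R) (A : {pred N}) (f : N -> M) : Prop :=
  forall (r : R^c) (u v : N), u \in A -> v \in A -> f (r *: u + v) = r *: f u + f v.

Definition mono_on (N M : rmodType R) (A : {pred N}) (f : N -> M) : Prop :=
  hom_on A f /\ {in A &, injective f}.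

Definition pseudo_principally_injective (N M : rmodType R) : Prop :=
  forall A : {pred N}, is_submodule A -> N_cyclic A ->
  forall f : N -> M, mono_on A f ->
  exists h : {linear N -> M}, forall x, x \in A -> h x = f x.

Definition injective_module (M : rmodType R) : Prop :=
  forall (A B : rmodType R) (i : {linear A -> B}), injective i ->
  forall g : {linear A -> M}, exists h : {linear B -> M}, forall a, h (i a) = g a.

End Defs.

From HB Require Import structures.
From mathcomp Require Import all_boot all_order all_algebra boolp.
Set Implicit Arguments. Unset Strict Implicit. Unset Printing Implicit Defensive.
Import GRing.Theory.
Local Open Scope ring_scope.
Local Open Scope quotient_scope.

(* (1) => (2): an injective module extends homomorphisms defined on any
   submodule, N-cyclic or not.  (2) => (1): if j : M -> P is a monomorphism,
   the image of the endomorphism (m, p) |-> (0, j m) of M * P is an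
   (M * P)-cyclic submodule on which (0, j m) |-> m is a monomorphism; its
   extension, restricted to 0 * P, is a retraction of j.  A module that is a
   retract of every extension is injective: push a monomorphism A -> B out
   along A -> M and compose with the retraction of M -> pushout. *)

Lemma injective_retraction (T U : Type) (x0 : T) (j : T -> U) :
  injective j -> exists k : U -> T, cancel j k.
Proof.
move=> j_inj.
exists (fun u => if pselect (exists t, j t = u) is left e then projT1 (cid e) else x0).
move=> t; case: pselect => [e|[]]; last by exists t.
by case: (cid e) => t' /= /j_inj.
Qed.

(* The proof arguments of [lin_of] and [submod_pred] occur in the types built
   from them, so that the instances below are found by unification. *)
Section LinearOf.
Variables (R : pzRingType) (U V : lmodType R) (f : U -> V).
Definition lin_of of linear f : U -> V := f.
Variable f_linear : linear f.
HB.instance Definition _ := GRing.isLinear.Build R U V *:%R (lin_of f_linear) f_linear.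
End LinearOf.

Section ProductInjections.
Variables (R : pzRingType) (U V : lmodType R).

Lemma pair_l0_linear : linear (fun u : U => (u, (0 : V))).
Proof. by move=> r u u'; congr pair; rewrite /= scaler0 addr0. Qed.

Lemma pair_0r_linear : linear (fun v : V => ((0 : U), v)).
Proof. by move=> r v v'; congr pair; rewrite /= scaler0 addr0. Qed.

Definition lmod_inl : {linear U -> U * V}%type := lin_of pair_l0_linear.
Definition lmod_inr : {linear V -> U * V}%type := lin_of pair_0r_linear.

End ProductInjections.

Section LinearImage.
Variables (R : pzRingType) (U V : lmodType R).

Definition image_pred (f : U -> V) : {pred V} := fun v => `[< exists u, v = f u >].

Lemma image_predP (f : U -> V) v : reflect (exists u, v = f u) (v \in image_pred f).
Proof. exact: asboolP. Qed.

Lemma linear_image_submod (f : {linear U -> V}) : submod_closed (image_pred f).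
Proof.
split; first by apply/image_predP; exists 0; rewrite linear0.
move=> r _ _ /image_predP[u ->] /image_predP[w ->].
by apply/image_predP; exists (r *: u + w); rewrite linearP.
Qed.

End LinearImage.

Section SubmodulePred.
Variables (R : pzRingType) (V : lmodType R) (A : {pred V}).
Definition submod_pred of submod_closed A : {pred V} := A.
Variable A_submod : submod_closed A.
HB.instance Definition _ :=
  GRing.isSubmodClosed.Build R V (submod_pred A_submod) A_submod.
End SubmodulePred.

Section Submodule.
Variables (R : pzRingType) (V : lmodType R) (A : {pred V}) (A_submod : submod_closed A).

Definition submod := {x : V | x \in submod_pred A_submod}.
HB.instance Definition _ := SubChoice.on submod.
HB.instance Definition _ := [SubChoice_isSubLmodule of submod by <:].

End Submodule.

Section QuotientModule.
Variables (R : pzRingType) (V : lmodType R) (A : {pred V}) (A_submod : submod_closed A).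

Local Notation S := (submod_pred A_submod).
Definition quotmod := {ideal_quot S}.
HB.instance Definition _ := Choice.on quotmod.
HB.instance Definition _ := GRing.Zmodule.on quotmod.

Definition quot_pi : V -> quotmod := \pi_{ideal_quot S}.
Definition quot_scale (r : R) : quotmod -> quotmod := lift_op1 {ideal_quot S} ( *:%R r).

Lemma quot_pi_scale r : {morph quot_pi : x / r *: x >-> quot_scale r x}.
Proof.
move=> x; unlock quot_scale; apply/eqP; rewrite piE Quotient.equivE.
by rewrite -scalerBr rpredZ // Quotient.idealrBE reprK.
Qed.
Canonical quot_pi_scale_morph r := PiMorph1 (quot_pi_scale r).

Lemma quot_scaleA a b (x : quotmod) : quot_scale a (quot_scale b x) = quot_scale (a * b) x.
Proof. by rewrite -[x]reprK !piE scalerA. Qed.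
Lemma quot_scale1 : left_id 1 quot_scale.
Proof. by move=> x; rewrite -[x]reprK !piE scale1r. Qed.
Lemma quot_scaleDr : right_distributive quot_scale +%R.
Proof. by move=> r x y; rewrite -[x]reprK -[y]reprK !piE scalerDr. Qed.
Lemma quot_scaleDl (x : quotmod) : {morph quot_scale^~ x : a b / a + b}.
Proof. by move=> a b; rewrite -[x]reprK !piE scalerDl. Qed.

HB.instance Definition _ := GRing.Zmodule_isLmodule.Build R quotmod
  quot_scaleA quot_scale1 quot_scaleDr quot_scaleDl.

Lemma quot_pi_linear : linear quot_pi.
Proof. by move=> r x y; rewrite !piE. Qed.
HB.instance Definition _ := GRing.isLinear.Build R V quotmod *:%R quot_pi quot_pi_linear.

Lemma quot_pi_eq0 x : (quot_pi x == 0) = (x \in A).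
Proof. by rewrite -(linear0 quot_pi) -Quotient.idealrBE subr0. Qed.

End QuotientModule.

Section Pushout.
Variables (R : pzRingType) (A B M : lmodType R) (i : {linear A -> B}) (g : {linear A -> M}).

Lemma pushout_rel_linear : linear (fun a => (g a, - i a) : M * B).
Proof. by move=> r a a'; rewrite !linearP. Qed.

Definition pushout := quotmod (linear_image_submod (lin_of pushout_rel_linear)).

Definition pushout_inl : {linear M -> pushout} := quot_pi _ \o lmod_inl M B.
Definition pushout_inr : {linear B -> pushout} := quot_pi _ \o lmod_inr M B.

Lemma pushout_commutes a : pushout_inl (g a) = pushout_inr (i a).
Proof.
apply/eqP; rewrite -subr_eq0 /= -linearB quot_pi_eq0.
by apply/image_predP; exists a; congr pair; rewrite /= ?subr0 ?sub0r.
Qed.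

Lemma pushout_inl_inj : injective i -> injective pushout_inl.
Proof.
move=> i_inj m m' /eqP; rewrite -subr_eq0 -linearB quot_pi_eq0.
move=> /image_predP[a [dm /esym/eqP]]; rewrite oppr_eq0 -(linear0 i) => /eqP/i_inj a0.
by apply/eqP; rewrite -subr_eq0 dm a0 linear0.
Qed.

End Pushout.

Section InjectiveModules.
Variables (R : pzRingType) (M : rmodType R).

Definition monos_split : Prop :=
  forall (P : rmodType R) (j : {linear M -> P}), injective j ->
  exists r : {linear P -> M}, cancel j r.

Lemma injective_module_extend (N : rmodType R) (A : {pred N}) (f : N -> M) :
  injective_module M -> is_submodule A -> hom_on A f ->
  exists h : {linear N -> M}, {in A, h =1 f}.
Proof.
move=> Minj A_submod f_hom.
have f_sub_linear : linear (fun x : submod A_submod => f (val x)).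
  by move=> r x y; rewrite -f_hom ?linearP //; apply: valP.
have [h hE] := Minj _ _ (val : {linear submod A_submod -> N}) val_inj (lin_of f_sub_linear).
by exists h => x Ax; exact: (hE (Sub x Ax)).
Qed.

Lemma monos_split_injective : monos_split -> injective_module M.
Proof.
move=> Msplit A B i i_inj g.
have [r inlK] := Msplit _ _ (pushout_inl_inj (g := g) i_inj).
by exists (r \o pushout_inr i g) => a; rewrite -[RHS]inlK pushout_commutes.
Qed.

Lemma pseudo_principally_injective_monos_split :
  (forall N : rmodType R, pseudo_principally_injective N M) -> monos_split.
Proof.
move=> Mpp P j j_inj.
have [k jK] := injective_retraction 0 j_inj.
have phi_linear : linear (fun x : M * P => ((0 : M), j x.1)).
  by move=> r x y; congr pair; rewrite /= ?scaler0 ?addr0 // linearP.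
pose phi : {linear M * P -> M * P}%type := lin_of phi_linear.
have phi_cyclic : N_cyclic (image_pred phi).
  by exists phi => x; split=> /image_predP.
have k_mono : mono_on (image_pred phi) (fun x => k x.2).
  split=> [r|] _ _ /image_predP[x ->] /image_predP[y ->].
    by rewrite -linearP /= !jK.
  by rewrite /= !jK => xy; rewrite /phi /lin_of xy.
have [h hE] := Mpp _ _ (linear_image_submod phi) phi_cyclic _ k_mono.
exists (h \o lmod_inr M P) => m; transitivity (h (phi (m, 0))) => //.
by rewrite hE /= ?jK //; apply/image_predP; exists (m, 0).
Qed.

End InjectiveModules.

Theorem proposition2p12 (R : pzRingType) (M : rmodType R) :
  injective_module M <-> (forall N : rmodType R, pseudo_principally_injective N M).
Proof.
split=> [Minj N A A_submod _ f [f_hom _]|Mpp].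
  exact: injective_module_extend.
exact/monos_split_injective/pseudo_principally_injective_monos_split.
Qed.
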